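(* Let $\epsilon\in(0,1)$ and let $h>0$ be arbitrary. Then there exists an initial value $u_0\in\mathbb{R}$ such that the sequence $(u_n)_{n\ge 0}$ generated by the explicit Euler scheme $$\frac{u_n-u_{n-1}}{h}+\frac{1}{\epsilon^2}\big(u_{n-1}^3-u_{n-1}\big)=0,\qquad n\ge 1,$$ converges to an incorrect steady state, i.e. $\lim_{n\to\infty}u_n$ exists and $\lim_{n\to\infty}u_n\neq \mathrm{sign}(u_0)$.
   Context: The scheme discretizes the ODE $u'(t)+\frac{1}{\epsilon^2}(u^3-u)=0$, $u(0)=u_0$, whose exact solution converges to $\mathrm{sign}(u_0)\in\{-1,0,1\}$ as $t\to\infty$ (with $\mathrm{sign}(0)=0$). A numerical solution is said to converge to the correct steady state if $\lim_{n\to\infty}u_n=\mathrm{sign}(u_0)$. *)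

From Stdlib Require Import Reals.
Open Scope R_scope.

Definition sgn (x : R) : R :=
  if Rlt_dec 0 x then 1 else if Rlt_dec x 0 then -1 else 0.

Fixpoint euler_seq (eps h u0 : R) (n : nat) : R :=
  match n with
  | O => u0
  | S m => let v := euler_seq eps h u0 m in v - h / (eps ^ 2) * (v ^ 3 - v)
  end.

(* With k = h / eps^2, one Euler step is v |-> v (1 + k - k v^2), which sends
   v = sqrt ((1 + k) / k) > 0 exactly onto the unstable equilibrium 0.  Since 0
   is a fixed point of the step, the scheme started there converges to
   0 <> sgn u0 = 1. *)

From Stdlib Require Import Reals Lra Lia.
Open Scope R_scope.

Definition euler_step (k v : R) : R := v - k * (v ^ 3 - v).

Lemma euler_seq_S (eps h u0 : R) (n : nat) :
  euler_seq eps h u0 (S n) = euler_step (h / eps ^ 2) (euler_seq eps h u0 n).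
Proof. reflexivity. Qed.

Lemma euler_step_0 (k : R) : euler_step k 0 = 0.
Proof. unfold euler_step; ring. Qed.

Lemma euler_step_sqrt_eq0 (k : R) : 0 < k -> euler_step k (sqrt ((1 + k) / k)) = 0.
Proof.
  intros Hk; set (v := sqrt ((1 + k) / k)).
  assert (Hsq : v * v = (1 + k) / k).
  { apply sqrt_sqrt; apply Rlt_le, Rdiv_lt_0_compat; lra. }
  unfold euler_step.
  replace (v - k * (v ^ 3 - v)) with (v * (1 + k - k * (v * v))) by ring.
  rewrite Hsq; field; lra.
Qed.

Lemma euler_seq_eq0_add (eps h u0 : R) (n m : nat) :
  euler_seq eps h u0 n = 0 -> euler_seq eps h u0 (n + m) = 0.
Proof.
  intros H0; induction m as [|m IH].
  - now rewrite Nat.add_0_r.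
  - now rewrite Nat.add_succ_r, euler_seq_S, IH, euler_step_0.
Qed.

Lemma Un_cv_eventually_const (u : nat -> R) (l : R) (N : nat) :
  (forall n, (N <= n)%nat -> u n = l) -> Un_cv u l.
Proof.
  intros Hu e He; exists N; intros n Hn.
  rewrite (Hu n Hn); unfold R_dist; rewrite Rminus_diag, Rabs_R0; exact He.
Qed.

Lemma sgn_pos (x : R) : 0 < x -> sgn x = 1.
Proof. intros Hx; unfold sgn; destruct (Rlt_dec 0 x); [reflexivity | lra]. Qed.

Theorem lemma2p1 (eps h : R) (Heps0 : 0 < eps) (Heps1 : eps < 1) (Hh : 0 < h) :
  exists u0 : R, exists l : R,
    Un_cv (euler_seq eps h u0) l /\ l <> sgn u0.
Proof.
  set (k := h / eps ^ 2).
  assert (Hk : 0 < k) by (apply Rdiv_lt_0_compat; [lra | apply pow_lt; lra]).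
  set (u0 := sqrt ((1 + k) / k)).
  assert (Hu0 : 0 < u0) by (apply sqrt_lt_R0, Rdiv_lt_0_compat; lra).
  assert (Hjump : euler_seq eps h u0 1 = 0) by exact (euler_step_sqrt_eq0 k Hk).
  exists u0, 0; split.
  - apply (Un_cv_eventually_const _ _ 1); intros n Hn.
    replace n with (1 + (n - 1))%nat by lia.
    now apply euler_seq_eq0_add.
  - rewrite sgn_pos by exact Hu0; lra.
Qed.
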